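(* Let $\mathcal X,\mathcal Y$ be finite sets, $\mathcal A$ an action set, $L:\mathcal Y\times\mathcal A\to\mathbb R$ a loss function, $d\ge0$ an integer and $f:\mathcal X\to\mathcal Y$ a function. Let $\{X_t\}$ be a process with values in $\mathcal X$ and $Y_t=f(X_{t-d})$. If $X_t\leftrightarrow X_{t-\mu}\leftrightarrow X_{t-\mu-\nu}$ is a Markov chain for all integers $\mu,\nu\ge0$, then $H_L(Y_t\mid X_{t-\delta})$ is (weakly) decreasing in $\delta$ for $0\le\delta<d$ and (weakly) increasing in $\delta$ for $\delta\ge d$. In addition, for any random variable $Z$ with values in $\mathcal X$, $$H_L(Y_t\mid X_{t-d})=H_L(Y_t\mid Y_t)\le H_L(Y_t\mid Z).$$
   Context: $H_L(Y\mid X)=\sum_xP_X(x)\min_{a\in\mathcal A}\mathbb E_{Y\sim P_{Y\mid X=x}}[L(Y,a)]$ is the $L$-conditional entropy (minima assumed attained). *)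

From HB Require Import structures.
From mathcomp Require Import all_boot all_order all_algebra.
From mathcomp Require Import all_classical all_reals all_analysis.
Set Implicit Arguments. Unset Strict Implicit. Unset Printing Implicit Defensive.
Import Order.TTheory GRing.Theory Num.Theory.
Local Open Scope classical_set_scope.
Local Open Scope ring_scope.

Definition prb (R : realType) (dm : measure_display) (T : measurableType dm)
  (P : probability T R) (E : set T) : R := fine (P E).

Definition margp (R : realType) (dm : measure_display) (T : measurableType dm)
  (P : probability T R) (U : Type) (X : T -> U) (x : U) : R :=
  prb P [set w | X w = x].

Definition jointp (R : realType) (dm : measure_display) (T : measurableType dm)
  (P : probability T R) (U V : Type) (X : T -> U) (Y : T -> V) (x : U) (y : V) : R :=
  prb P [set w | X w = x /\ Y w = y].

(* conditional pmf P(Y = y | X = x) = P(X = x, Y = y) / P(X = x)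
   (equal to 0 when P(X = x) = 0, by the convention x / 0 = 0) *)
Definition condp (R : realType) (dm : measure_display) (T : measurableType dm)
  (P : probability T R) (U V : Type) (Y : T -> V) (X : T -> U) (y : V) (x : U) : R :=
  jointp P X Y x y / margp P X x.

Definition expected_loss (R : realType) (Ys : finType) (A : Type)
  (L : Ys -> A -> R) (q : Ys -> R) (a : A) : R :=
  \sum_(y : Ys) q y * L y a.

(* min_{a in A} E_{Y ~ q}[L(Y,a)]  (the infimum, which is a minimum under
   the attainment assumption [minima_attained]) *)
Definition minloss (R : realType) (Ys : finType) (A : Type)
  (L : Ys -> A -> R) (q : Ys -> R) : R :=
  inf (range (expected_loss L q)).

Definition minima_attained (R : realType) (Ys : finType) (A : Type)
  (L : Ys -> A -> R) : Prop :=
  forall q : Ys -> R, (forall y, 0 <= q y) -> \sum_(y : Ys) q y = 1 ->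
    exists a0 : A, forall a : A, expected_loss L q a0 <= expected_loss L q a.

Definition HL (R : realType) (dm : measure_display) (T : measurableType dm)
  (P : probability T R) (Ys : finType) (A : Type) (L : Ys -> A -> R)
  (U : finType) (Y : T -> Ys) (X : T -> U) : R :=
  \sum_(x : U) margp P X x * minloss L (fun y => condp P Y X y x).

Definition discrete_rv (dm : measure_display) (T : measurableType dm)
  (U : Type) (X : T -> U) : Prop :=
  forall x : U, measurable [set w | X w = x].

Definition markov_chain (R : realType) (dm : measure_display) (T : measurableType dm)
  (P : probability T R) (U : finType) (XA XB XC : T -> U) : Prop :=
  forall a b c : U, 0 < margp P XB b ->
    prb P [set w | XA w = a /\ XC w = c /\ XB w = b] / margp P XB b
    = condp P XA XB a b * condp P XC XB c b.

(* L-conditional entropy satisfies a data-processing inequality: if the law of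
   (Z, Y) factors through B, i.e. P(z, y) = sum_b P(z, b) P(y | b), then
   H_L(Y | B) <= H_L(Y | Z).  Indeed, an action a_z optimal for P_{Y|Z=z} is
   admissible for every P_{Y|B=b}, and averaging the losses of a_z over b
   with weights P(z, b) gives back P(z) times the optimal loss given Z = z.
   Such a factorization holds when Z - B - Y is a Markov chain, a relation
   which is symmetric, and when Y is a function of B.  With B = X_{t-delta}
   for the suitable lag, the Markov property of the process yields both
   monotonicity claims, and Y_t = f(X_{t-d}) yields the last two. *)

From HB Require Import structures.
From mathcomp Require Import all_boot all_order all_algebra.
From mathcomp Require Import all_classical all_reals all_analysis.
From mathcomp Require Import zify.
Set Implicit Arguments. Unset Strict Implicit. Unset Printing Implicit Defensive.
Import Order.TTheory GRing.Theory Num.Theory.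
Local Open Scope classical_set_scope.
Local Open Scope ring_scope.

Section Events.
Context (R : realType) (dm : measure_display) (T : measurableType dm)
  (P : probability T R).

Lemma prbE (E : set T) : measurable E -> P E = (prb P E)%:E.
Proof. by move=> mE; rewrite /prb fineK // fin_num_measure. Qed.

Lemma prb_ge0 (E : set T) : 0 <= prb P E.
Proof. by rewrite /prb fine_ge0. Qed.

Lemma eq_prb (Q1 Q2 : T -> Prop) : (forall w, Q1 w <-> Q2 w) ->
  prb P [set w | Q1 w] = prb P [set w | Q2 w].
Proof. by move=> Q12; congr prb; apply/funext => w; apply/propext. Qed.

Lemma prb_pred0 (Q : T -> Prop) : (forall w, ~ Q w) -> prb P [set w | Q w] = 0.
Proof.
move=> Q0; rewrite (_ : [set w | Q w] = set0) ?/prb ?measure0 //.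
by apply/funext => w; apply/propext; split => // /Q0.
Qed.

Lemma le_prb (A B : set T) : measurable A -> measurable B -> A `<=` B ->
  prb P A <= prb P B.
Proof.
by move=> mA mB AB; rewrite -lee_fin -!prbE // le_measure // inE.
Qed.

Lemma measurable_discrete_rv_pred (U : finType) (V : T -> U) (p : U -> Prop) :
  discrete_rv V -> measurable [set w | p (V w)].
Proof.
move=> dV; rewrite (_ : [set w | p (V w)] = \bigcup_(u in p) [set w | V w = u]).
  by apply: fin_bigcup_measurable => // u _; exact: dV.
by apply/funext => w; apply/propext; split => [pw|[u pu /= ->]//]; exists (V w).
Qed.

Lemma prb_total (U : finType) (V : T -> U) (Q : T -> Prop) :
  discrete_rv V -> measurable [set w | Q w] ->
  prb P [set w | Q w] = \sum_(u : U) prb P [set w | Q w /\ V w = u].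
Proof.
move=> dV mQ; have mQV u : measurable [set w | Q w /\ V w = u].
  by apply: measurableI => //; exact: dV.
apply: EFin_inj; rewrite -prbE // -sumEFin.
under eq_bigr do rewrite -prbE //.
have -> : [set w | Q w] = \bigcup_(u in [set: U]) [set w | Q w /\ V w = u].
  by apply/funext => w; apply/propext; split => [Qw|[u _ []//]]; exists (V w).
rewrite measure_fin_bigcup //; last by move=> u v _ _ [w [[_ <-] [_ <-]]].
rewrite (fsbigE (enum U)) ?enum_uniq //.
- by under eq_bigl do rewrite in_setT; rewrite big_enum.
- by move=> u _; rewrite mem_enum.
- exact: finite_finset.
Qed.

Lemma discrete_rv_comp (U V : finType) (B : T -> U) (g : U -> V) :
  discrete_rv B -> discrete_rv (fun w => g (B w)).
Proof. by move=> dB v; apply: (measurable_discrete_rv_pred (fun u => g u = v)). Qed.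

End Events.

Section Pmf.
Context (R : realType) (dm : measure_display) (T : measurableType dm)
  (P : probability T R).

Lemma jointpC (U V : Type) (X : T -> U) (Y : T -> V) x y :
  jointp P X Y x y = jointp P Y X y x.
Proof. by apply: eq_prb => w; tauto. Qed.

Lemma jointp_ge0 (U V : Type) (X : T -> U) (Y : T -> V) x y : 0 <= jointp P X Y x y.
Proof. exact: prb_ge0. Qed.

Lemma margp_ge0 (U : Type) (X : T -> U) x : 0 <= margp P X x.
Proof. exact: prb_ge0. Qed.

Lemma condp_ge0 (U V : Type) (Y : T -> V) (X : T -> U) y x : 0 <= condp P Y X y x.
Proof. by rewrite divr_ge0 ?jointp_ge0 ?margp_ge0. Qed.

Variables (U V : finType) (X : T -> U) (Y : T -> V).
Hypotheses (dX : discrete_rv X) (dY : discrete_rv Y).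

Lemma sum_jointp_r x : \sum_y jointp P X Y x y = margp P X x.
Proof. by rewrite /margp (prb_total P dY (dX x)). Qed.

Lemma sum_jointp_l y : \sum_x jointp P X Y x y = margp P Y y.
Proof.
by rewrite /margp (prb_total P dX (dY y)); apply: eq_bigr => x _; exact: jointpC.
Qed.

Lemma jointp_le_margp x y : jointp P X Y x y <= margp P X x.
Proof.
by apply: le_prb; [exact: measurableI (dX x) (dY y) | exact: dX | move=> w []].
Qed.

Lemma jointp_le_margp_r x y : jointp P X Y x y <= margp P Y y.
Proof.
rewrite jointpC.
by apply: le_prb; [exact: measurableI (dY y) (dX x) | exact: dY | move=> w []].
Qed.

Lemma margp_eq0_jointp x y : margp P X x = 0 -> jointp P X Y x y = 0.
Proof.
by move=> mx0; apply/eqP; rewrite eq_le jointp_ge0 andbT -mx0 jointp_le_margp.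
Qed.

Lemma mul_margp_condp x y : margp P X x * condp P Y X y x = jointp P X Y x y.
Proof.
have [mx0|mx_neq0] := eqVneq (margp P X x) 0.
  by rewrite mx0 mul0r margp_eq0_jointp.
by rewrite mulrC divfK.
Qed.

Lemma jointp_comp (W : finType) (g : V -> W) x z :
  jointp P X (fun w => g (Y w)) x z = \sum_y (g y == z)%:R * jointp P X Y x y.
Proof.
rewrite /jointp (prb_total P dY); last first.
  exact: measurableI (dX x) (discrete_rv_comp g dY z).
apply: eq_bigr => y _; have [<-|gyz] := eqVneq (g y) z.
  by rewrite mul1r; apply: eq_prb => w; split=> [[[]]|[? ->]].
rewrite mul0r; apply: prb_pred0 => w [[_ gYz] Yy].
by move: gyz; rewrite -Yy gYz eqxx.
Qed.

Lemma condp_sum1 x : 0 < margp P X x -> \sum_y condp P Y X y x = 1.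
Proof. by move=> mx_gt0; rewrite -mulr_suml sum_jointp_r divff ?gt_eqF. Qed.

End Pmf.

Section Loss.
Context (R : realType) (Ys : finType) (A : Type) (L : Ys -> A -> R).

Lemma minlossE q a0 : (forall a, expected_loss L q a0 <= expected_loss L q a) ->
  minloss L q = expected_loss L q a0.
Proof.
move=> a0_min; apply/le_anti/andP; split.
  by apply: ge_inf; [exists (expected_loss L q a0) => _ [a _ <-] | exists a0].
by apply: lb_le_inf => [|_ [a _ <-]//]; exists (expected_loss L q a0), a0.
Qed.

Lemma minloss_le q a : minima_attained L ->
  (forall y, 0 <= q y) -> \sum_y q y = 1 -> minloss L q <= expected_loss L q a.
Proof.
move=> ma q_ge0 q_sum1; have [a0 a0_min] := ma q q_ge0 q_sum1.
by rewrite (minlossE a0_min).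
Qed.

End Loss.

Section DataProcessing.
Context (R : realType) (dm : measure_display) (T : measurableType dm)
  (P : probability T R).

(* The Markov chain Z - B - Y seen only through the joint law of (Z, Y):
   weaker than [markov_chain], and all that data processing needs. *)
Definition markov_pmf (U V W : finType) (Z : T -> U) (B : T -> V) (Y : T -> W) :=
  forall z y, jointp P Z Y z y = \sum_b jointp P Z B z b * condp P Y B y b.

Lemma condp_comp (U V W : finType) (B : T -> U) (C : T -> V) (g : V -> W) y b :
  discrete_rv B -> discrete_rv C ->
  condp P (fun w => g (C w)) B y b = \sum_c (g c == y)%:R * condp P C B c b.
Proof.
move=> dB dC; rewrite /condp jointp_comp // mulr_suml.
by apply: eq_bigr => c _; rewrite mulrA.
Qed.

Lemma condp_comp_self (U V : finType) (B : T -> U) (g : U -> V) y b :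
  0 < margp P B b -> condp P (fun w => g (B w)) B y b = (g b == y)%:R.
Proof.
move=> mb_gt0; rewrite /condp; have [<-|gby] := eqVneq (g b) y.
  rewrite (_ : jointp _ _ _ _ _ = margp P B b) ?divff ?gt_eqF //.
  by apply: eq_prb => w; split=> [[]|->].
rewrite /jointp prb_pred0 ?mul0r // => w [-> gby'].
by rewrite gby' eqxx in gby.
Qed.

Lemma markov_pmf_comp (U V W : finType) (Z : T -> U) (B : T -> V) (g : V -> W) :
  discrete_rv Z -> discrete_rv B -> markov_pmf Z B (fun w => g (B w)).
Proof.
move=> dZ dB z y; rewrite jointp_comp //; apply: eq_bigr => b _.
have := jointp_ge0 P Z B z b; rewrite le0r => /predU1P[->|jzb_gt0].
  by rewrite !mul0r mulr0.
have mb_gt0 : 0 < margp P B b.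
  exact: lt_le_trans jzb_gt0 (jointp_le_margp_r P dZ dB z b).
by rewrite condp_comp_self // mulrC.
Qed.

Lemma markov_chain_sym (U : finType) (A B C : T -> U) :
  markov_chain P A B C -> markov_chain P C B A.
Proof.
move=> ABC c b a mb_gt0; rewrite [RHS]mulrC -ABC //.
by congr (_ / _); apply: eq_prb => w; tauto.
Qed.

Lemma markov_chainE (U : finType) (A B C : T -> U) a b c :
  discrete_rv A -> discrete_rv B -> discrete_rv C -> markov_chain P A B C ->
  prb P [set w | A w = a /\ C w = c /\ B w = b]
  = jointp P A B a b * condp P C B c b.
Proof.
move=> dA dB dC ABC; have := margp_ge0 P B b; rewrite le0r => /predU1P[mb0|mb_gt0].
  rewrite jointpC margp_eq0_jointp // mul0r.
  apply/eqP; rewrite eq_le prb_ge0 andbT -mb0.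
  apply: le_prb; [|exact: dB|by move=> w [_ []]].
  by apply: measurableI; [exact: dA | apply: measurableI; [exact: dC | exact: dB]].
by rewrite jointpC -mul_margp_condp // -mulrA -ABC // mulrCA divff ?gt_eqF ?mulr1.
Qed.

Lemma markov_pmf_chain (U V : finType) (A B C : T -> U) (f : U -> V) :
  discrete_rv A -> discrete_rv B -> discrete_rv C -> markov_chain P A B C ->
  markov_pmf A B (fun w => f (C w)).
Proof.
move=> dA dB dC ABC a y.
under [RHS]eq_bigr do rewrite condp_comp // mulr_sumr.
rewrite exchange_big jointp_comp //; apply: eq_bigr => c _.
rewrite /jointp (prb_total P dB); last exact: measurableI (dA a) (dC c).
rewrite mulr_sumr; apply: eq_bigr => b _.
rewrite (eq_prb P (Q2 := fun w => A w = a /\ C w = c /\ B w = b)); last first.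
  by move=> w; tauto.
by rewrite markov_chainE // mulrCA.
Qed.

Variables (Ys : finType) (Act : Type) (L : Ys -> Act -> R).
Hypothesis ma : minima_attained L.

Lemma margp_expected_loss (U : finType) (Z : T -> U) (Y : T -> Ys) z a :
  discrete_rv Z -> discrete_rv Y ->
  margp P Z z * expected_loss L (condp P Y Z ^~ z) a
  = \sum_y jointp P Z Y z y * L y a.
Proof.
move=> dZ dY; rewrite mulr_sumr.
by apply: eq_bigr => y _; rewrite mulrA mul_margp_condp.
Qed.

Lemma HL_le_markov_pmf (U V : finType) (Y : T -> Ys) (B : T -> U) (Z : T -> V) :
  discrete_rv Y -> discrete_rv B -> discrete_rv Z -> markov_pmf Z B Y ->
  HL P L Y B <= HL P L Y Z.
Proof.
move=> dY dB dZ ZBY; rewrite /HL.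
under eq_bigr do rewrite -(sum_jointp_l P dZ dB) mulr_suml.
rewrite exchange_big /=; apply: ler_sum => z _.
have := margp_ge0 P Z z; rewrite le0r => /predU1P[mz0|mz_gt0].
  by rewrite mz0 mul0r big1 // => b _; rewrite margp_eq0_jointp ?mul0r.
have [a a_min] := ma (condp_ge0 P Y Z ^~ z) (condp_sum1 dZ dY mz_gt0).
rewrite (minlossE a_min) margp_expected_loss //.
have -> : \sum_y jointp P Z Y z y * L y a
    = \sum_b jointp P Z B z b * expected_loss L (condp P Y B ^~ b) a.
  under eq_bigr do rewrite ZBY mulr_suml.
  rewrite exchange_big; apply: eq_bigr => b _.
  by rewrite mulr_sumr; apply: eq_bigr => y _; rewrite mulrA.
apply: ler_sum => b _.
have := jointp_ge0 P Z B z b; rewrite le0r => /predU1P[->|jzb_gt0].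
  by rewrite !mul0r.
have mb_gt0 : 0 < margp P B b.
  exact: lt_le_trans jzb_gt0 (jointp_le_margp_r P dZ dB z b).
rewrite ler_wpM2l ?jointp_ge0 ?minloss_le // => [y|]; first exact: condp_ge0.
exact: condp_sum1.
Qed.

Lemma HL_le_markov_chain (U : finType) (A B C : T -> U) (f : U -> Ys) :
  discrete_rv A -> discrete_rv B -> discrete_rv C -> markov_chain P A B C ->
  HL P L (fun w => f (C w)) B <= HL P L (fun w => f (C w)) A.
Proof.
move=> dA dB dC ABC; apply: HL_le_markov_pmf => //; first exact: discrete_rv_comp.
exact: markov_pmf_chain.
Qed.

Lemma HL_comp_le (U V : finType) (B : T -> U) (Z : T -> V) (g : U -> Ys) :
  discrete_rv B -> discrete_rv Z ->
  HL P L (fun w => g (B w)) B <= HL P L (fun w => g (B w)) Z.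
Proof.
move=> dB dZ; apply: HL_le_markov_pmf => //; first exact: discrete_rv_comp.
exact: markov_pmf_comp.
Qed.

End DataProcessing.

Lemma markov_chain_lags (R : realType) (dm : measure_display) (T : measurableType dm)
  (P : probability T R) (Xs : finType) (X : int -> T -> Xs) :
  (forall (t : int) (mu nu : nat),
      markov_chain P (X t) (X (t - mu%:Z)) (X (t - mu%:Z - nu%:Z))) ->
  forall (t : int) (d1 d2 d3 : nat), (d1 <= d2 <= d3)%N ->
  markov_chain P (X (t - d1%:Z)) (X (t - d2%:Z)) (X (t - d3%:Z)).
Proof.
move=> markovX t d1 d2 d3 /andP[le12 le23].
have := markovX (t - d1%:Z) (d2 - d1)%N (d3 - d2)%N.
have -> : t - d1%:Z - (d2 - d1)%N%:Z = t - d2%:Z by lia.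
by have -> : t - d2%:Z - (d3 - d2)%N%:Z = t - d3%:Z by lia.
Qed.

Theorem lemma4 (R : realType) (dm : measure_display) (T : measurableType dm)
  (P : probability T R) (Xs Ys : finType) (A : Type) (L : Ys -> A -> R)
  (d : nat) (f : Xs -> Ys) (X : int -> T -> Xs) :
  (forall t : int, discrete_rv (X t)) ->
  minima_attained L ->
  (forall (t : int) (mu nu : nat),
      markov_chain P (X t) (X (t - mu%:Z)) (X (t - mu%:Z - nu%:Z))) ->
  forall t : int,
    (forall delta1 delta2 : nat, (delta1 <= delta2 < d)%N ->
       HL P L (fun w => f (X (t - d%:Z) w)) (X (t - delta2%:Z))
       <= HL P L (fun w => f (X (t - d%:Z) w)) (X (t - delta1%:Z))) /\
    (forall delta1 delta2 : nat, (d <= delta1 <= delta2)%N ->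
       HL P L (fun w => f (X (t - d%:Z) w)) (X (t - delta1%:Z))
       <= HL P L (fun w => f (X (t - d%:Z) w)) (X (t - delta2%:Z))) /\
    HL P L (fun w => f (X (t - d%:Z) w)) (X (t - d%:Z))
      = HL P L (fun w => f (X (t - d%:Z) w)) (fun w => f (X (t - d%:Z) w)) /\
    (forall Z : T -> Xs, discrete_rv Z ->
       HL P L (fun w => f (X (t - d%:Z) w)) (X (t - d%:Z))
       <= HL P L (fun w => f (X (t - d%:Z) w)) Z).
Proof.
move=> dX ma markovX t; have dY := discrete_rv_comp f (dX (t - d%:Z)).
split; [|split; [|split]].
- move=> d1 d2 /andP[le12 lt2d]; apply: HL_le_markov_chain => //.
  by apply: (markov_chain_lags markovX); rewrite le12 ltnW.
- move=> d1 d2 le_d12; apply: HL_le_markov_chain => //.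
  exact/markov_chain_sym/(markov_chain_lags markovX).
- apply/le_anti/andP; split; first exact: HL_comp_le.
  exact: (HL_comp_le P ma id).
- by move=> Z dZ; apply: HL_comp_le.
Qed.
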